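(* The closure (in the sup norm) of the convex hull of $\{h_A: A\subseteq[0,\pi]\text{ Lebesgue measurable}\}$ coincides with $\mathbf{E}(\mathbb{S}^1)$.
   Context: $\mathbb{S}^1=\mathbb{R}/2\pi$ with its geodesic metric. For a metric space $X$, $\Delta(X)=\{f:X\to\mathbb{R}\text{ bounded}:f(x)+f(x')\ge d_X(x,x')\}$ and the tight span $\mathbf{E}(X)$ is the set of pointwise-minimal elements of $\Delta(X)$ with the sup-norm metric. For $\theta\in\mathbb{R}$, $g_\theta:\mathbb{S}^1\to\mathbb{R}$ is $g_\theta(\varphi)=\frac12$ if $\varphi\in[\theta,\theta+\pi)$ (mod $2\pi$) and $-\frac12$ otherwise. For a Lebesgue measurable $A\subseteq[0,\pi]$, $h_A:\mathbb{S}^1\to\mathbb{R}$ is $h_A(\varphi)=\frac{\pi}{2}+\int_0^\pi g_\theta(\varphi)\big(1_A(\theta)-1_{[0,\pi]\setminus A}(\theta)\big)\,d\theta$. *)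

From mathcomp Require Import all_boot all_order all_algebra.
From mathcomp Require Import all_classical all_reals all_analysis.
Set Implicit Arguments. Unset Strict Implicit. Unset Printing Implicit Defensive.
Import Order.TTheory GRing.Theory Num.Theory.
Local Open Scope classical_set_scope.
Local Open Scope ring_scope.

(* S^1 = R / 2pi.  Points of S^1 are represented by reals; functions on S^1
   are represented by 2pi-periodic functions R -> R. *)

Definition circ_periodic {R : realType} (f : R -> R) : Prop :=
  forall x : R, f (x + 2 * pi) = f x.

Definition circ_red {R : realType} (x : R) : R :=
  x - 2 * pi * (Num.floor (x / (2 * pi)))%:~R.

Definition circ_dist {R : realType} (x y : R) : R :=
  Num.min (circ_red (x - y)) (2 * pi - circ_red (x - y)).

Definition Delta_circ {R : realType} (f : R -> R) : Prop :=
  [/\ circ_periodic f,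
      (exists M : R, forall x, `|f x| <= M) &
      forall x y : R, circ_dist x y <= f x + f y].

Definition tight_span_circ {R : realType} : set (R -> R) :=
  [set f | Delta_circ f /\
     forall g : R -> R, Delta_circ g -> (forall x, g x <= f x) -> g = f].

Definition g_theta {R : realType} (theta phi : R) : R :=
  if circ_red (phi - theta) < pi then 1 / 2 else - (1 / 2).

Definition I0pi {R : realType} : set R := `[0, pi].

(* Lebesgue measurable subsets of R: the Caratheodory sigma-algebra of the
   Lebesgue outer measure, i.e. the domain of completed_lebesgue_measure *)
Definition lebesgue_measurable {R : realType} (A : set R) : Prop :=
  ((wlength (@idfun R))^*)%mu.-cara.-measurable A.

Definition h_A {R : realType} (A : set R) (phi : R) : R :=
  pi / 2 + Rintegral (@completed_lebesgue_measure R) I0pi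
    (fun theta => g_theta theta phi * (\1_A theta - \1_(I0pi `\` A) theta)).

Definition conv_hull {R : realType} (S : set (R -> R)) : set (R -> R) :=
  [set f | exists (n : nat) (w : 'I_n -> R) (fs : 'I_n -> R -> R),
     [/\ forall i, S (fs i), forall i, 0 <= w i, \sum_(i < n) w i = 1 &
         f = fun x => \sum_(i < n) w i * fs i x]].

Definition sup_closure {R : realType} (S : set (R -> R)) : set (R -> R) :=
  [set f | forall e : R, 0 < e -> exists g, S g /\ forall x, `|f x - g x| <= e].

Definition hA_family {R : realType} : set (R -> R) :=
  [set f | exists A : set R, [/\ lebesgue_measurable A, A `<=` I0pi & f = h_A A]].

From mathcomp Require Import all_boot all_order all_algebra.
From mathcomp Require Import all_classical all_reals all_analysis.
From mathcomp Require Import measurable_realfun lra zify ring.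
Set Implicit Arguments. Unset Strict Implicit. Unset Printing Implicit Defensive.
Import Order.TTheory GRing.Theory Num.Theory.
Local Open Scope classical_set_scope.
Local Open Scope ring_scope.

(* The tight span E(S^1) consists exactly of the functions f with
   f x + f (x + pi) = pi that are 1-Lipschitz for the geodesic metric: such an
   f is minimal in Delta because f x + f (x + pi) >= d(x, x + pi) = pi is
   attained, and conversely minimality forces both properties.  This class is
   convex and closed under uniform limits.  Every h_A lies in it: on [0, pi),
   h_A phi = pi/2 + S phi - S pi / 2 with S t = |A n [0,t]| - |[0,t] \ A|
   (signed_mass A), and |S t - S s| <= |t - s|, |S t| <= t.  Conversely, cut
   [0, pi] into n cells and let A be a random union of cells, cell k being
   taken independently with probability (1 + slope of f on cell k) / 2.  The
   expectation of h_A is a convex combination of functions h_A; it agrees with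
   f at the grid points, hence is within 2 pi / n of f. *)

Section CircleDistance.
Variable R : realType.
Implicit Types (x y z : R) (k : int).
Local Notation d := (@circ_dist R).

Lemma two_pi_gt0 : (0 : R) < 2 * pi.
Proof. by rewrite mulr_gt0 // pi_gt0. Qed.

Lemma circ_red_itv x : 0 <= circ_red x < 2 * pi.
Proof.
have hp := two_pi_gt0; have /andP[h1 h2] := floor_itv (x / (2 * pi)).
rewrite /circ_red subr_ge0 ltrBlDl mulrC -ler_pdivlMr //= h1 /=.
by move: h2; rewrite ltr_pdivrMr // intrD mulrDl mul1r mulrC.
Qed.

Lemma circ_red_decomp x : exists k, x = circ_red x + 2 * pi * k%:~R.
Proof. by exists (Num.floor (x / (2 * pi))); rewrite subrK. Qed.

Lemma circ_red_uniq x y k : 0 <= y < 2 * pi -> x = y + 2 * pi * k%:~R ->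
  circ_red x = y.
Proof.
have hp := two_pi_gt0; move=> /andP[y0 y1] ->; rewrite /circ_red.
suff -> : Num.floor ((y + 2 * pi * k%:~R) / (2 * pi)) = k by rewrite addrK.
apply: floor_def; rewrite mulrDl mulrAC divff ?gt_eqF // mul1r intrD.
by rewrite lerDr divr_ge0 ?(ltW hp) //= addrC ltrD2l ltr_pdivrMr // mul1r.
Qed.

Lemma circ_red_shift x k : circ_red (x + 2 * pi * k%:~R) = circ_red x.
Proof.
have [m hm] := circ_red_decomp x.
by apply: (circ_red_uniq (k := m + k)); [exact: circ_red_itv | rewrite {1}hm intrD; ring].
Qed.

Lemma circ_dist_cases x y :
  d x y <= circ_red (x - y) /\ d x y <= 2 * pi - circ_red (x - y) /\
  (d x y = circ_red (x - y) \/ d x y = 2 * pi - circ_red (x - y)).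
Proof.
rewrite /circ_dist ge_min lexx ge_min lexx orbT /Num.min.
by do 2!split => //; case: ifP; [left | right].
Qed.

Lemma circ_dist_le_lift x y k : d x y <= `|x - y - 2 * pi * k%:~R|.
Proof.
have [m hm] := circ_red_decomp (x - y); have /andP[r0 r1] := circ_red_itv (x - y).
have [d1 [d2 _]] := circ_dist_cases x y; have hp := two_pi_gt0.
set r := circ_red (x - y) in hm r0 r1 d1 d2.
rewrite [x - y]hm -addrA -mulrBr -intrB.
have [j0|j0] := lerP 0 (m - k).
  have : 0 <= 2 * pi * (m - k)%:~R :> R by apply: mulr_ge0; [exact: ltW | rewrite ler0z].
  by move=> h; rewrite ger0_norm; lra.
have : (m - k)%:~R <= -1 :> R by rewrite -[-1 : R]/((-1 : int)%:~R) ler_int; lia.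
by rewrite -(ler_pM2l hp) => h; rewrite ltr0_norm; lra.
Qed.

Lemma circ_dist_lift x y : exists k, d x y = `|x - y - 2 * pi * k%:~R|.
Proof.
have [m hm] := circ_red_decomp (x - y); have /andP[r0 r1] := circ_red_itv (x - y).
have [_ [_ [-> | ->]]] := circ_dist_cases x y.
  by exists m; rewrite {2}hm addrK ger0_norm.
exists (m + 1).
have -> : x - y - 2 * pi * (m + 1)%:~R = circ_red (x - y) - 2 * pi.
  by rewrite {1}hm intrD; ring.
by rewrite ltr0_norm ?opprB // subr_lt0.
Qed.

Lemma circ_dist_ge0 x y : 0 <= d x y.
Proof. by have [k ->] := circ_dist_lift x y. Qed.

Lemma circ_dist_le_pi x y : d x y <= pi.
Proof. have [d1 [d2 _]] := circ_dist_cases x y; lra. Qed.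

Lemma circ_dist_le_norm x y : d x y <= `|x - y|.
Proof. by have := circ_dist_le_lift x y 0; rewrite mulr0 subr0. Qed.

Lemma circ_dist_xx x : d x x = 0.
Proof.
by apply/eqP; rewrite eq_le circ_dist_ge0 -(normr0 R) -(subrr x) circ_dist_le_norm.
Qed.

Lemma circ_distC x y : d x y = d y x.
Proof.
suff le : forall x y, d y x <= d x y by apply/eqP; rewrite eq_le !le.
move=> {}x {}y; have [k ->] := circ_dist_lift x y.
rewrite (_ : x - y - _ = - (y - x - 2 * pi * (- k)%:~R)) ?normrN; last by rewrite intrN; ring.
exact: circ_dist_le_lift.
Qed.

Lemma circ_dist_triangle x y z : d x z <= d x y + d y z.
Proof.
have [k1 ->] := circ_dist_lift x y; have [k2 ->] := circ_dist_lift y z.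
apply: le_trans (circ_dist_le_lift x z (k1 + k2)) _.
rewrite (_ : x - z - _ = (x - y - 2 * pi * k1%:~R) + (y - z - 2 * pi * k2%:~R)).
  exact: ler_normD.
by rewrite intrD; ring.
Qed.

Lemma circ_dist_eq0 x y : d x y = 0 -> exists k, y = x + 2 * pi * k%:~R.
Proof.
have [k -> /normr0_eq0 h] := circ_dist_lift x y.
by exists (- k); rewrite intrN mulrN; lra.
Qed.

Lemma circ_dist_shiftl x y k : d (x + 2 * pi * k%:~R) y = d x y.
Proof. by rewrite /circ_dist addrAC circ_red_shift. Qed.

Lemma circ_dist_shiftr x y k : d x (y + 2 * pi * k%:~R) = d x y.
Proof. by rewrite circ_distC circ_dist_shiftl circ_distC. Qed.

Lemma circ_dist_antipodal x y : d (x + pi) y = pi - d x y.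
Proof.
have [m hm] := circ_red_decomp (x - y); have /andP[r0 r1] := circ_red_itv (x - y).
have [d1 [d2 d3]] := circ_dist_cases x y.
have [d1' [d2' d3']] := circ_dist_cases (x + pi) y.
set r := circ_red (x - y) in hm r0 r1 d1 d2 d3.
have [rlt|rge] := ltrP r pi.
  have e : circ_red (x + pi - y) = r + pi.
    by apply: (circ_red_uniq (k := m)); [apply/andP; split; lra | rewrite addrAC hm; ring].
  by rewrite e in d1' d2' d3'; case: d3; case: d3'; lra.
have e : circ_red (x + pi - y) = r - pi.
  apply: (circ_red_uniq (k := m + 1)); first by apply/andP; split; lra.
  by rewrite addrAC hm intrD; ring.
by rewrite e in d1' d2' d3'; case: d3; case: d3'; lra.
Qed.

Lemma circ_dist_antipodalr x y : d x (y + pi) = pi - d x y.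
Proof. by rewrite circ_distC circ_dist_antipodal circ_distC. Qed.

Lemma circ_dist_norm x y : `|x - y| <= pi -> d x y = `|x - y|.
Proof.
move=> hxy; apply/eqP; rewrite eq_le circ_dist_le_norm /=.
have [k ->] := circ_dist_lift x y.
have [->|k0] := eqVneq k 0; first by rewrite mulr0 subr0.
have k1 : 1 <= `|k%:~R : R| by rewrite -intr_norm ler1z -gtz0_ge1 normr_gt0.
have : 2 * pi <= `|2 * pi * k%:~R : R|.
  by rewrite normrM ger0_norm ?ler_peMr // ltW // two_pi_gt0.
have := lerB_dist (2 * pi * k%:~R) (x - y).
by rewrite [`|2 * pi * _ - _|]distrC; lra.
Qed.

End CircleDistance.

Section TightSpan.
Variable R : realType.
Implicit Types (f g : R -> R) (x y : R) (k : int).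
Local Notation d := (@circ_dist R).

Lemma circ_periodicz f : circ_periodic f -> forall x k, f (x + 2 * pi * k%:~R) = f x.
Proof.
move=> fp; have fnat y n : f (y + 2 * pi * n%:R) = f y.
  elim: n => [|n IH]; first by rewrite mulr0 addr0.
  by rewrite -natr1 (_ : _ + _ = y + 2 * pi * n%:R + 2 * pi) ?fp //; ring.
move=> x [n|n]; first exact: fnat.
by rewrite -[in RHS](subrK (2 * pi * n.+1%:R) x) fnat NegzE intrN mulrN.
Qed.

Definition tight_fun f : Prop :=
  [/\ circ_periodic f, forall x, f x + f (x + pi) = pi &
      forall x y, f x <= f y + d x y].

Lemma tight_fun_Delta f : tight_fun f -> Delta_circ f.
Proof.
case=> fp fa fl; split => // [|x y]; last first.
  by have := fl (x + pi) y; rewrite circ_dist_antipodal; have := fa x; lra.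
exists (`|f 0| + pi) => x; rewrite ler_norml.
have := fl x 0; have := fl 0 x; have := circ_dist_le_pi x 0; have := circ_dist_le_pi 0 x.
by have := ler_norm (f 0); have := ler_norm (- f 0); rewrite normrN; lra.
Qed.

Lemma tight_fun_tight_span f : tight_fun f -> tight_span_circ f.
Proof.
move=> tf; split; first exact: tight_fun_Delta.
case: tf => _ fa _ g [_ _ gd] gf; apply/funext => x; apply/eqP.
rewrite eq_le gf /=; have := gd x (x + pi); rewrite circ_distC circ_dist_antipodal.
by rewrite circ_dist_xx; have := gf (x + pi); have := fa x; lra.
Qed.

(* Lowering f to v on the orbit of x0 keeps it in Delta, so minimality of f
   forbids f x0 > v. *)
Lemma tight_span_le f x0 v : tight_span_circ f -> 0 <= v ->
  (forall y, d x0 y <= v + f y) -> f x0 <= v.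
Proof.
move=> [[fp [M fM] fd] fmin] v0 hv; rewrite leNgt; apply/negP => vlt.
pose g y := if d x0 y == 0 then v else f y.
have gle y : g y <= f y.
  rewrite /g; case: ifP => [/eqP/circ_dist_eq0 [k ->]|//].
  by rewrite (circ_periodicz fp) ltW.
have gD : Delta_circ g.
  split.
  - by move=> y; rewrite /g -[2 * pi]mulr1 -[1]/(1%:~R) circ_dist_shiftr (circ_periodicz fp).
  - exists (M + v) => y; have := fM x0; have := normr_ge0 (f x0).
    by rewrite /g; case: ifP => _; [rewrite (ger0_norm v0) | have := fM y]; lra.
  - move=> y y'; have := circ_dist_triangle y x0 y'; have := circ_dist_triangle x0 y y'.
    have := circ_dist_triangle x0 y' y; rewrite (circ_distC y x0) (circ_distC y' y).
    have := hv y; have := hv y'; have := fd y y'; have := circ_dist_ge0 y y'.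
    by rewrite /g; case: ifP => /eqP e1; case: ifP => /eqP e2; rewrite ?e1 ?e2; lra.
have /(congr1 (fun h => h x0)) := fmin g gD gle.
by rewrite /g circ_dist_xx eqxx => e; move: vlt; rewrite -e ltxx.
Qed.

Lemma tight_span_tight_fun f : tight_span_circ f -> tight_fun f.
Proof.
move=> tf; have [[fp _ fd] _] := tf.
have f0 x : 0 <= f x by have := fd x x; rewrite circ_dist_xx; lra.
have fl x z : f x <= f z + d x z.
  apply: tight_span_le => // [|y]; first by rewrite addr_ge0 ?circ_dist_ge0.
  by have := circ_dist_triangle x z y; have := fd z y; lra.
split => // x; apply: le_anti; apply/andP; split; last first.
  by have := fd x (x + pi); rewrite circ_distC circ_dist_antipodal circ_dist_xx subr0.
have flip y : d x y <= pi - f (x + pi) + f y.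
  by have := fl (x + pi) y; rewrite circ_dist_antipodal; lra.
have [c0|c0] := lerP 0 (pi - f (x + pi)).
  suff : f x <= pi - f (x + pi) by lra.
  exact: tight_span_le tf c0 flip.
have : f x <= 0 by apply: tight_span_le => // y; have := flip y; lra.
by have := flip x; rewrite circ_dist_xx; have := f0 x; lra.
Qed.

Lemma circ_half_decomp x : exists a k, 0 <= a < pi /\
  (x = a + 2 * pi * k%:~R \/ x = a + pi + 2 * pi * k%:~R).
Proof.
have [k hk] := circ_red_decomp x; have /andP[r0 r1] := circ_red_itv x.
have [rlt|rge] := ltrP (circ_red x) pi.
  by exists (circ_red x), k; split; [apply/andP | left].
exists (circ_red x - pi), k; split; first by apply/andP; split; lra.
by right; rewrite {1}hk; ring.
Qed.

Lemma tight_fun_of_half f : circ_periodic f ->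
  (forall a, 0 <= a < pi -> f a + f (a + pi) = pi) ->
  (forall a b, 0 <= a < pi -> 0 <= b < pi ->
     `|f a - f b| <= `|a - b| /\ `|f a + f b - pi| <= pi - `|a - b|) ->
  tight_fun f.
Proof.
move=> fp fa fab.
have fa' x : f x + f (x + pi) = pi.
  have [a [k [ha [-> | ->]]]] := circ_half_decomp x.
    by rewrite addrAC !(circ_periodicz fp) fa.
  rewrite (_ : _ + pi = a + 2 * pi * (k + 1)%:~R); last by rewrite intrD; ring.
  by rewrite !(circ_periodicz fp) addrC fa.
split => // x y.
have [a [k [ha ex]]] := circ_half_decomp x; have [b [l [hb ey]]] := circ_half_decomp y.
have [+ +] := fab a b ha hb; rewrite !ler_norml => /andP[? ?] /andP[? ?].
have := normr_ge0 (a - b); have := fa a ha; have := fa b hb.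
have dab : d a b = `|a - b|.
  by apply: circ_dist_norm; move: ha hb => /andP[? ?] /andP[? ?]; rewrite ler_norml; lra.
case: ex => ->; case: ey => ->;
  rewrite !(circ_periodicz fp) circ_dist_shiftl circ_dist_shiftr.
- by rewrite dab; lra.
- by rewrite circ_dist_antipodalr dab; lra.
- by rewrite circ_dist_antipodal dab; lra.
- by rewrite circ_dist_antipodal circ_dist_antipodalr dab; lra.
Qed.

Lemma tight_fun_lipschitz f x y : tight_fun f -> `|f x - f y| <= d x y.
Proof.
case=> _ _ fl; rewrite ler_norml; have := fl x y; have := fl y x.
by rewrite circ_distC => ? ?; apply/andP; split; lra.
Qed.

Lemma tight_fun_close f g e : tight_fun f -> tight_fun g ->
  (forall a, 0 <= a < pi -> `|f a - g a| <= e) -> forall x, `|f x - g x| <= e.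
Proof.
move=> [fp fa _] [gp ga _] fg x.
have [a [k [ha [-> | ->]]]] := circ_half_decomp x;
  rewrite (circ_periodicz fp) (circ_periodicz gp); first exact: fg.
have := fa a; have := ga a; have := fg a ha; rewrite !ler_norml => /andP[? ?] ? ?.
by apply/andP; split; lra.
Qed.

Lemma tight_span_circE : @tight_span_circ R = tight_fun.
Proof.
apply/seteqP; split => f; [exact: tight_span_tight_fun | exact: tight_fun_tight_span].
Qed.

Lemma tight_fun_sum (I : finType) (w : I -> R) (fs : I -> R -> R) :
  (forall i, tight_fun (fs i)) -> (forall i, 0 <= w i) -> \sum_i w i = 1 ->
  tight_fun (fun x => \sum_i w i * fs i x).
Proof.
move=> tfs w0 w1; split => [x | x | x y].
- by apply: eq_bigr => i _; case: (tfs i) => ->.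
- rewrite -big_split /= -[RHS]mul1r -w1 mulr_suml.
  by apply: eq_bigr => i _; rewrite -mulrDr; case: (tfs i) => _ ->.
- rewrite -[d x y]mul1r -w1 mulr_suml -big_split /=.
  by apply: ler_sum => i _; rewrite -mulrDr ler_wpM2l //; case: (tfs i) => _ _ ->.
Qed.

Lemma tight_fun_sup_closure (S : set (R -> R)) f :
  S `<=` tight_fun -> sup_closure S f -> tight_fun f.
Proof.
move=> Stight fS.
have approx e : 0 < e -> exists g, tight_fun g /\ forall x, f x - e <= g x <= f x + e.
  move=> e0; have [g [Sg fg]] := fS e e0; exists g; split; first exact: Stight.
  by move=> x; have := fg x; rewrite ler_norml => /andP[? ?]; apply/andP; split; lra.
split => [x | x | x y]; last first.
  apply/ler_addgt0Pr => e e0.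
  have [g [[_ _ gl] fg]] := approx (e / 2) (divr_gt0 e0 (ltr0Sn _ _)).
  by have := fg x; have := fg y; have := gl x y => ? /andP[? ?] /andP[? ?]; lra.
all: apply: le_anti; apply/andP; split; apply/ler_addgt0Pr => e e0;
  have [g [[gp ga _] fg]] := approx (e / 4) (divr_gt0 e0 (ltr0Sn _ _));
  have := gp x; have := ga x; have := fg x; have := fg (x + pi); have := fg (x + 2 * pi);
  by move=> /andP[? ?] /andP[? ?] /andP[? ?]; lra.
Qed.

End TightSpan.

Section SignedMass.
Variable R : realType.
Local Notation T := (caratheodory_type (R:=R) (wlength (@idfun R))^*%mu).
Local Notation mu := (@completed_lebesgue_measure R).
Local Notation I := (@I0pi R).
Implicit Types (A D : set T) (s t : R).

Lemma measurable_itvT (i : interval R) : measurable ([set` i] : set T).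
Proof. by apply: sub_caratheodory; exact: measurable_itv. Qed.

Lemma mu_itv (b1 b2 : bool) s t : s <= t ->
  mu [set` Interval (BSide b1 s) (BSide b2 t)] = (t - s)%:E.
Proof.
have -> : mu [set` Interval (BSide b1 s) (BSide b2 t)] =
  lebesgue_measure [set` Interval (BSide b1 s) (BSide b2 t)] by [].
rewrite lebesgue_measure_itv /= => st; case: ltP => //; rewrite lee_fin => ts.
have -> : t = s by apply/eqP; rewrite eq_le ts st.
by rewrite subrr.
Qed.

Lemma mu_itv_lty (b1 b2 : bool) s t : s <= t ->
  (mu [set` Interval (BSide b1 s) (BSide b2 t)] < +oo)%E.
Proof. by move=> st; rewrite mu_itv ?ltry. Qed.

Lemma bounded_by D (f : T -> R) M : (forall x, `|f x| <= M) -> [bounded f x | x in D].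
Proof.
move=> fM; rewrite /bounded_near; near=> M' => x _ /=; apply: le_trans (fM x) _.
by near: M'; apply: nbhs_pinfty_ge; exact: num_real.
Unshelve. all: by end_near.
Qed.

Definition signed_indic (A : set R) (t : R) : R := \1_A t - \1_(I `\` A) t.

Definition signed_mass (A : set R) (t : R) : R :=
  \int[mu]_(s in `[0, t]) signed_indic A s.

Lemma signed_indic_le1 A t : `|signed_indic A t| <= 1.
Proof.
rewrite /signed_indic !indicE.
case: (t \in A); case: (t \in _); rewrite ?subr0 ?sub0r ?subrr ?normrN ?normr1 ?normr0 //.
Qed.

Lemma measurable_signed_indic A : measurable A ->
  measurable_fun (setT : set T) (signed_indic A).
Proof.
move=> mA; apply: measurable_funB; apply: measurable_indic => //.
by apply: measurableD => //; exact: measurable_itvT.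
Qed.

Lemma integrable_signed_indic A D : measurable A -> measurable D ->
  (mu D < +oo)%E -> mu.-integrable D (EFin \o signed_indic A).
Proof.
move=> mA mD Dfin; apply: measurable_bounded_integrable => //.
  exact: measurable_funS (measurable_signed_indic mA).
exact/bounded_by/signed_indic_le1.
Qed.

Lemma integrable_signed_indic_itv A (b1 b2 : bool) s t : measurable A -> s <= t ->
  mu.-integrable [set` Interval (BSide b1 s) (BSide b2 t)] (EFin \o signed_indic A).
Proof.
by move=> mA st; apply: integrable_signed_indic (measurable_itvT _) (mu_itv_lty _ _ st).
Qed.

Lemma le_Rintegral_signed_indic A D : measurable A -> measurable D ->
  (mu D < +oo)%E -> `|\int[mu]_(t in D) signed_indic A t| <= fine (mu D).
Proof.
move=> mA mD Dfin; have iA := integrable_signed_indic mA mD Dfin.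
apply: le_trans (le_normr_Rintegral mD iA) _; rewrite -[leRHS]mul1r -Rintegral_cst //.
apply: le_Rintegral => //; first exact: integrable_norm.
  apply: measurable_bounded_integrable => //.
  by apply: bounded_by => x; rewrite normr1.
by move=> x _; exact: signed_indic_le1.
Qed.

Lemma Rintegral_itv_split (f : T -> R) a s t : a <= s <= t ->
  mu.-integrable `[a, t] (EFin \o f) ->
  \int[mu]_(x in `[a, t]) f x =
  \int[mu]_(x in `[a, s]) f x + \int[mu]_(x in `]s, t]) f x.
Proof.
move=> /andP[a_s st] fint.
have E : `[a, t]%classic = `[a, s]%classic `|` `]s, t]%classic :> set R.
  by apply: itv_bndbnd_setU; rewrite bnd_simp.
rewrite E in fint *; apply: Rintegral_setU => //; try exact: measurable_itvT.
by apply/disj_setPS => x [/=]; rewrite !in_itv /= => /andP[_ ?] /andP[? _]; lra.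
Qed.

Lemma signed_mass_split A s t : measurable A -> 0 <= s <= t ->
  signed_mass A t = signed_mass A s + \int[mu]_(x in `]s, t]) signed_indic A x.
Proof.
move=> mA /andP[s0 st]; apply: Rintegral_itv_split; first by rewrite s0.
exact: integrable_signed_indic_itv mA (le_trans s0 st).
Qed.

Lemma signed_mass_lipschitz A s t : measurable A -> 0 <= s <= t ->
  `|signed_mass A t - signed_mass A s| <= t - s.
Proof.
move=> mA /andP[s0 st]; rewrite (signed_mass_split mA (s := s)) ?s0 // addrC addKr.
have -> : t - s = fine (mu `]s, t]) by rewrite mu_itv.
exact: le_Rintegral_signed_indic mA (measurable_itvT _) (mu_itv_lty _ _ st).
Qed.

Lemma norm_signed_mass_le A t : measurable A -> 0 <= t -> `|signed_mass A t| <= t.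
Proof.
move=> mA t0; have mut : fine (mu `[0, t]) = t by rewrite mu_itv ?subr0.
rewrite -[leRHS]mut.
exact: le_Rintegral_signed_indic mA (measurable_itvT _) (mu_itv_lty _ _ t0).
Qed.

Lemma integrable_sign_step A (phi c : R) : measurable A ->
  mu.-integrable I (EFin \o (fun x : T => (if x <= phi then c else - c) * signed_indic A x)).
Proof.
move=> mA; have mstep : measurable_fun setT (fun x : T => if x <= phi then c else - c).
  apply: measurable_fun_ifT => //; apply: (measurable_fun_bool true).
  rewrite setTI (_ : _ @^-1` _ = `]-oo, phi]%classic); first exact: measurable_itvT.
  by apply/seteqP; split => x /=; rewrite in_itv.
apply: measurable_bounded_integrable.
- exact: measurable_itvT.
- exact/mu_itv_lty/ltW/pi_gt0.
- apply: measurable_funM; first exact: measurable_funS mstep.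
  exact: measurable_funS (measurable_signed_indic mA).
apply: (@bounded_by _ _ `|c|) => x; rewrite normrM -[leRHS]mulr1.
by rewrite ler_pM ?signed_indic_le1 //; case: ifP => _; rewrite ?normrN.
Qed.

Lemma Rintegral_sign_step A (phi c : R) : measurable A -> 0 <= phi <= pi ->
  \int[mu]_(x in I) ((if x <= phi then c else - c) * signed_indic A x) =
  c * (2 * signed_mass A phi - signed_mass A pi).
Proof.
move=> mA /andP[phi0 phipi].
rewrite /I0pi (Rintegral_itv_split (s := phi)) ?phi0 //; last exact: integrable_sign_step.
rewrite (eq_Rintegral mu (g := fun x => c * signed_indic A x)); last first.
  by move=> x /set_mem; rewrite /= in_itv /= => /andP[_ ->].
rewrite [X in _ + X](eq_Rintegral mu (g := fun x => - c * signed_indic A x)); last first.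
  by move=> x /set_mem; rewrite /= in_itv /= => /andP[/lt_geF ->].
rewrite !RintegralZl; try exact: measurable_itvT; try exact: integrable_signed_indic_itv.
by rewrite (signed_mass_split (t := pi) mA (s := phi)) ?phi0 // /signed_mass; ring.
Qed.

Lemma g_theta_lower (th phi : R) : 0 <= th <= pi -> 0 <= phi < pi ->
  g_theta th phi = if th <= phi then 1 / 2 else - (1 / 2).
Proof.
move=> /andP[t0 t1] /andP[p0 p1]; rewrite /g_theta.
have [tp|pt] := lerP th phi.
  rewrite (circ_red_uniq (y := phi - th) (k := 0)) ?mulr0 ?addr0 //; last by apply/andP; split; lra.
  by rewrite ifT //; lra.
rewrite (circ_red_uniq (y := phi - th + 2 * pi) (k := -1)); last 2 first.
- by apply/andP; split; lra.
- by rewrite mulrN1 addrK.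
by rewrite ifF //; apply/negbTE; rewrite -leNgt; lra.
Qed.

Lemma g_theta_upper (th phi : R) : 0 <= th <= pi -> 0 <= phi < pi ->
  g_theta th (phi + pi) = if th <= phi then - (1 / 2) else 1 / 2.
Proof.
move=> /andP[t0 t1] /andP[p0 p1]; rewrite /g_theta.
rewrite (circ_red_uniq (y := phi + pi - th) (k := 0)) ?mulr0 ?addr0 //; last first.
  by apply/andP; split; lra.
have [tp|pt] := lerP th phi; last by rewrite ifT //; lra.
by rewrite ifF //; apply/negbTE; rewrite -leNgt; lra.
Qed.

Lemma h_A_halves A (phi : R) : measurable A -> 0 <= phi < pi ->
  h_A A phi = pi / 2 + signed_mass A phi - signed_mass A pi / 2 /\
  h_A A (phi + pi) = pi / 2 - signed_mass A phi + signed_mass A pi / 2.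
Proof.
move=> mA hphi; have phi_le : 0 <= phi <= pi by case/andP: hphi => -> /ltW.
rewrite /h_A -/(signed_indic A); split.
  rewrite (eq_Rintegral mu (g := fun x => (if x <= phi then 1 / 2 else - (1 / 2)) *
    signed_indic A x)); last by move=> x /set_mem hx; rewrite g_theta_lower.
  by rewrite Rintegral_sign_step //; lra.
rewrite (eq_Rintegral mu (g := fun x => (if x <= phi then - (1 / 2) else - - (1 / 2)) *
  signed_indic A x)); last by move=> x /set_mem hx; rewrite g_theta_upper ?opprK.
by rewrite Rintegral_sign_step //; lra.
Qed.

Lemma h_A_periodic A : circ_periodic (h_A A).
Proof.
move=> x; rewrite /h_A; congr (_ + _); apply: eq_Rintegral => th _.
by rewrite /g_theta addrAC -[2 * pi]mulr1 -[1]/(1%:~R) circ_red_shift.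
Qed.

Lemma tight_fun_h_A A : measurable A -> tight_fun (h_A A).
Proof.
move=> mA; apply: tight_fun_of_half; first exact: h_A_periodic.
  by move=> a ha; have [-> ->] := h_A_halves mA ha; lra.
pose F := signed_mass A.
have key a b : 0 <= a -> a <= b -> b <= pi ->
    `|F a - F b| <= b - a /\ `|F a + F b - F pi| <= pi - (b - a).
  move=> a0 ab bpi; have b0 := le_trans a0 ab.
  have /ler_normlP[? ?] : `|F a| <= a := norm_signed_mass_le mA a0.
  have /ler_normlP[? ?] : `|F b - F a| <= b - a.
    by apply: signed_mass_lipschitz => //; rewrite a0 ab.
  have /ler_normlP[? ?] : `|F pi - F b| <= pi - b.
    by apply: signed_mass_lipschitz => //; rewrite b0 bpi.
  by rewrite !ler_norml; split; apply/andP; split; lra.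
move=> a b ha hb; have [-> _] := h_A_halves mA ha; have [-> _] := h_A_halves mA hb.
case/andP: ha => a0 /ltW api; case/andP: hb => b0 /ltW bpi.
rewrite -/F; have [ab|/ltW ba] := lerP a b;
  [have [] := key a b a0 ab bpi | have [] := key b a b0 ba api];
  by rewrite !ler_norml => /andP[? ?] /andP[? ?]; split; apply/andP; split; lra.
Qed.

End SignedMass.

Lemma conv_hull_fintype (R : realType) (S : set (R -> R)) (I : finType)
    (w : I -> R) (fs : I -> R -> R) :
  (forall i, S (fs i)) -> (forall i, 0 <= w i) -> \sum_i w i = 1 ->
  conv_hull S (fun x => \sum_i w i * fs i x).
Proof.
move=> Sfs w0 w1; exists #|I|, (w \o enum_val), (fs \o enum_val).
have enumE (F : I -> R) : \sum_(k < #|I|) F (enum_val k) = \sum_i F i.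
  by rewrite -(big_enum_val (A := I)); apply: eq_bigl => i; rewrite inE.
split=> [i | i | | ]; [exact: Sfs | exact: w0 | by rewrite -w1 -enumE | ].
by apply/funext => x; rewrite -enumE.
Qed.

Definition bool_sign {R : ringType} (b : bool) : R := if b then 1 else -1.

Section ProductWeights.
Variables (R : comRingType) (n : nat) (p : 'I_n -> R).

Definition prod_weight (F : {ffun 'I_n -> bool}) : R :=
  \prod_(i < n) (if F i then p i else 1 - p i).

Lemma sum_prod_weight : \sum_F prod_weight F = 1.
Proof.
rewrite /prod_weight -(bigA_distr_bigA (fun i (b : bool) => if b then p i else 1 - p i)).
by apply: big1 => i _; rewrite big_bool /= addrC subrK.
Qed.

Lemma sum_prod_weight_sign j : \sum_F prod_weight F * bool_sign (F j) = 2 * p j - 1.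
Proof.
pose G i (b : bool) := (if b then p i else 1 - p i) * (if i == j then bool_sign b else 1).
have e F : prod_weight F * bool_sign (F j) = \prod_(i < n) G i (F i).
  rewrite /G big_split /=; congr (_ * _).
  by rewrite (bigD1 j) //= eqxx big1 ?mulr1 // => i /negbTE ->.
rewrite (eq_bigr _ (fun F _ => e F)) -(bigA_distr_bigA G) (bigD1 j) //= [X in _ * X]big1.
  by rewrite /G big_bool /= eqxx /bool_sign; ring.
by move=> i /negbTE ij; rewrite big_bool /G /= ij !mulr1 addrC subrK.
Qed.

End ProductWeights.

Lemma prod_weight_ge0 (R : numDomainType) n (p : 'I_n -> R) F :
  (forall i, 0 <= p i <= 1) -> 0 <= prod_weight p F.
Proof.
move=> p01; apply: prodr_ge0 => i _; have /andP[p0 p1] := p01 i.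
by case: (F i); rewrite ?subr_ge0.
Qed.

Section Grid.
Variables (R : realType) (N : nat).
Local Notation n := N.+1.
Local Notation T := (caratheodory_type (R:=R) (wlength (@idfun R))^*%mu).
Local Notation mu := (@completed_lebesgue_measure R).

Definition mesh : R := pi / n%:R.

Definition grid (k : nat) : R := k%:R * mesh.

Definition grid_cells (F : {ffun 'I_n -> bool}) : set R :=
  \bigcup_(k in [set k : nat | (k < n)%N /\ F (inord k)]) `]grid k, grid k.+1]%classic.

Lemma mesh_gt0 : 0 < mesh.
Proof. by rewrite divr_gt0 // pi_gt0. Qed.

Lemma gridS k : grid k.+1 = grid k + mesh.
Proof. by rewrite /grid -natr1 mulrDl mul1r. Qed.

Lemma grid0 : grid 0 = 0.
Proof. by rewrite /grid mul0r. Qed.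

Lemma grid_last : grid n = pi.
Proof. by rewrite /grid /mesh mulrC -mulrA mulVf ?mulr1 // pnatr_eq0. Qed.

Lemma ler_grid j k : (j <= k)%N -> grid j <= grid k.
Proof. by move=> jk; rewrite /grid ler_pM2r ?mesh_gt0 // ler_nat. Qed.

Lemma grid_ge0 k : 0 <= grid k.
Proof. by rewrite -grid0 ler_grid. Qed.

Lemma grid_le_pi k : (k <= n)%N -> grid k <= pi.
Proof. by move=> kn; rewrite -grid_last ler_grid. Qed.

Lemma grid_cell_uniq j k t :
  grid j < t <= grid j.+1 -> grid k < t <= grid k.+1 -> j = k.
Proof.
move=> /andP[jt tj] /andP[kt tk]; apply/eqP; rewrite eqn_leq.
by apply/andP; split; rewrite leqNgt; apply/negP => /ler_grid; lra.
Qed.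

Lemma grid_cell_sub k t : (k < n)%N -> grid k < t <= grid k.+1 -> I0pi t.
Proof.
move=> kn /andP[? ?]; rewrite /I0pi /= in_itv /=.
by have := grid_ge0 k; have := grid_le_pi kn; move=> ? ?; apply/andP; split; lra.
Qed.

Lemma measurable_grid_cells F : measurable (grid_cells F : set T).
Proof. by apply: bigcup_measurable => k _; exact: measurable_itvT. Qed.

Lemma signed_indic_grid_cells F k t : (k < n)%N -> grid k < t <= grid k.+1 ->
  signed_indic (grid_cells F) t = bool_sign (F (inord k)).
Proof.
move=> kn tk; have tI := grid_cell_sub kn tk.
have memA : (t \in grid_cells F) = F (inord k).
  apply/idP/idP => [/set_mem [j /= [_ Fj] tj] | Fk]; last by apply/mem_set; exists k.
  by rewrite -(grid_cell_uniq tj tk).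
rewrite /signed_indic !indicE in_setD memA (mem_set tI) /bool_sign.
by case: (F _); rewrite /= ?subr0 ?sub0r.
Qed.

Lemma signed_mass_grid F k : (k <= n)%N ->
  signed_mass (grid_cells F) (grid k) = \sum_(i < k) bool_sign (F (inord i)) * mesh.
Proof.
have mF := measurable_grid_cells F.
elim: k => [_|k IH kn].
  rewrite big_ord0 grid0; apply/eqP; rewrite -normr_le0.
  exact: norm_signed_mass_le mF (lexx 0).
rewrite (signed_mass_split mF (s := grid k)) ?grid_ge0 ?ler_grid //.
rewrite IH ?(ltnW kn) // big_ord_recr /=; congr (_ + _).
rewrite (eq_Rintegral mu (g := fun=> bool_sign (F (inord k)))); last first.
  by move=> t /set_mem; exact: signed_indic_grid_cells.
have cell : fine (mu `]grid k, grid k.+1]) = mesh.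
  by rewrite mu_itv ?ler_grid //= gridS addrAC subrr add0r.
rewrite Rintegral_cst; [exact: congr1 _ cell | exact: measurable_itvT].
Qed.

End Grid.

Lemma mesh_trunc_le (R : realType) (e : R) : 0 < e -> 2 * mesh R (Num.trunc (2 * pi / e)) <= e.
Proof.
move=> e0; have h0 : 0 <= 2 * pi / e by rewrite divr_ge0 ?ltW ?two_pi_gt0.
have /andP[_] := truncn_itv h0; rewrite ltr_pdivrMr // /mesh mulrA => lt.
by rewrite ler_pdivrMr ?ltr0Sn // [e * _]mulrC ltW.
Qed.

Section GridApproximation.
Variables (R : realType) (f : R -> R) (N : nat).
Hypothesis tf : tight_fun f.
Local Notation n := N.+1.
Local Notation mesh := (@mesh R N).
Local Notation grid := (@grid R N).

Definition grid_prob (i : 'I_n) : R := (1 + (f (grid i.+1) - f (grid i)) / mesh) / 2.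

Definition grid_approx (x : R) : R :=
  \sum_(F : {ffun 'I_n -> bool}) prod_weight grid_prob F * h_A (grid_cells F) x.

Lemma grid_step_le k : `|f (grid k.+1) - f (grid k)| <= mesh.
Proof.
apply: le_trans (tight_fun_lipschitz _ _ tf) _; apply: le_trans (circ_dist_le_norm _ _) _.
by rewrite gridS addrAC subrr add0r ger0_norm // ltW // mesh_gt0.
Qed.

Lemma grid_prob_itv i : 0 <= grid_prob i <= 1.
Proof.
have m0 := @mesh_gt0 R N; have /ler_normlP[lo hi] := grid_step_le i.
have lo' : -1 <= (f (grid i.+1) - f (grid i)) / mesh by rewrite ler_pdivlMr // mulN1r lerNl.
have hi' : (f (grid i.+1) - f (grid i)) / mesh <= 1 by rewrite ler_pdivrMr // mul1r.
by rewrite /grid_prob; apply/andP; split; lra.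
Qed.

(* Cell i enters the random set with probability grid_prob i, so the expected
   sign of cell i is the slope of f on it, and the expected signed mass
   telescopes. *)
Lemma expected_signed_mass_grid k : (k <= n)%N ->
  \sum_F prod_weight grid_prob F * signed_mass (grid_cells F) (grid k) = f (grid k) - f 0.
Proof.
move=> kn; under eq_bigr => F _ do rewrite signed_mass_grid // mulr_sumr.
have -> : f 0 = f (grid 0) by rewrite grid0.
rewrite exchange_big /= -(telescope_sumr (fun i => f (grid i)) (leq0n k)) big_mkord.
apply: eq_bigr => i _; under eq_bigr => F _ do rewrite mulrA.
rewrite -mulr_suml sum_prod_weight_sign /grid_prob inordK ?(leq_trans (ltn_ord i) kn) //.
by field; rewrite gt_eqF ?mesh_gt0.
Qed.

Lemma conv_hull_grid_approx : conv_hull hA_family grid_approx.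
Proof.
apply: conv_hull_fintype => [F | F |]; last exact: sum_prod_weight.
  exists (grid_cells F); split => //; first exact: measurable_grid_cells.
  by move=> t [k /= [kn _]]; exact: grid_cell_sub.
exact: prod_weight_ge0 grid_prob_itv.
Qed.

Lemma tight_fun_grid_approx : tight_fun grid_approx.
Proof.
apply: tight_fun_sum => [F | F |]; last exact: sum_prod_weight.
  exact/tight_fun_h_A/measurable_grid_cells.
exact: prod_weight_ge0 grid_prob_itv.
Qed.

Lemma grid_approx_grid k : (k < n)%N -> grid_approx (grid k) = f (grid k).
Proof.
move=> kn; have hk : 0 <= grid k < pi.
  by rewrite grid_ge0 /= (lt_le_trans _ (grid_le_pi R kn)) // gridS ltrDl mesh_gt0.
pose w := prod_weight grid_prob.
rewrite /grid_approx (eq_bigr (fun F => w F * (pi / 2) + w F * signed_mass (grid_cells F) (grid k)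
    - w F * signed_mass (grid_cells F) (grid n) / 2)); last first.
  by move=> F _; rewrite (h_A_halves (measurable_grid_cells F) hk).1 grid_last /w; ring.
rewrite sumrB big_split /= -!mulr_suml sum_prod_weight !expected_signed_mass_grid ?(ltnW kn) //.
by case: tf => _ fa _; have := fa 0; rewrite add0r grid_last; lra.
Qed.

Lemma grid_approx_close x : `|f x - grid_approx x| <= 2 * mesh.
Proof.
apply: (tight_fun_close tf tight_fun_grid_approx) => a /andP[a0 api].
have m0 := mesh_gt0 R N; pose k := Num.trunc (a / mesh).
have /andP[ka ak] := truncn_itv (divr_ge0 a0 (ltW m0)).
have kn : (k < n)%N.
  rewrite truncn_lt_nat; last exact: divr_ge0 a0 (ltW m0).
  by rewrite ltr_pdivrMr // -[n%:R * _]/(grid n) grid_last.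
have gk : grid k <= a < grid k + mesh.
  by rewrite -gridS /grid -ler_pdivlMr // -ltr_pdivrMr // ka.
have := tight_fun_lipschitz a (grid k) tf.
have := tight_fun_lipschitz a (grid k) tight_fun_grid_approx.
have : circ_dist a (grid k) <= mesh.
  by apply: le_trans (circ_dist_le_norm _ _) _; rewrite ger0_norm; lra.
rewrite grid_approx_grid // !ler_norml => ? /andP[? ?] /andP[? ?].
by apply/andP; split; lra.
Qed.

End GridApproximation.

Theorem theorem3p21 (R : realType) :
  sup_closure (conv_hull (@hA_family R)) = @tight_span_circ R.
Proof.
rewrite tight_span_circE; apply/seteqP; split => f.
  apply: tight_fun_sup_closure => g [n [w [fs [hA w0 w1 ->]]]].
  by apply: tight_fun_sum => // i; have [A [mA _ ->]] := hA i; exact: tight_fun_h_A.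
move=> tf e e0; exists (grid_approx f (Num.trunc (2 * pi / e))).
split; first exact: conv_hull_grid_approx.
by move=> x; apply: le_trans (grid_approx_close _ tf x) (mesh_trunc_le e0).
Qed.
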